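(* Let $(M,d)$ be a compact metric space and $\varphi:M\to M$ continuous, and assume either (C) there is a homeomorphism $\theta$ of $M$ with $\theta\circ\theta=\mathrm{Id}_M$ and $\varphi=\theta\circ\varphi\circ\theta$ (set $\theta_n=\theta$), or (R) $\varphi$ is a homeomorphism and there is a homeomorphism $\theta$ with $\theta\circ\theta=\mathrm{Id}_M$ and $\varphi^{-1}=\theta\circ\varphi\circ\theta$ (set $\theta_n=\theta\circ\varphi^{n-1}$). If $\mathcal G=\{G_n\}$ is asymptotically additive with approximating sequence $\{G^{(k)}\}$, then $\mathcal G\circ\theta:=\{G_n\circ\theta_n\}$ is asymptotically additive with approximating sequence $\{G^{(k)}\circ\theta\}$.
   Context: $C(M),B(M)$: continuous/bounded Borel real functions with sup norm; $S_nG=\sum_{k<n}G\circ\varphi^k$. $\mathcal G=\{G_n\}\subset B(M)$ is asymptotically additive with approximating sequence $\{G^{(k)}\}\subset C(M)$ if $\lim_k\limsup_nn^{-1}\|G_n-S_nG^{(k)}\|_\infty=0$. *)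

From HB Require Import structures.
From mathcomp Require Import all_boot all_order all_algebra.
From mathcomp Require Import all_classical all_reals all_analysis.
Set Implicit Arguments. Unset Strict Implicit. Unset Printing Implicit Defensive.
Import Order.TTheory GRing.Theory Num.Theory.
Import numFieldNormedType.Exports.
Local Open Scope classical_set_scope.
Local Open Scope ring_scope.

Definition borel_set {T : topologicalType} (A : set T) : Prop := <<s open >> A.

Definition borel_fun {R : realType} {T : topologicalType} (f : T -> R) : Prop :=
  forall A : set R, measurable A -> borel_set (f @^-1` A).

Definition bounded_borel {R : realType} {T : topologicalType} (f : T -> R) : Prop :=
  borel_fun f /\ exists c : R, forall x, `|f x| <= c.

Definition supnorm {R : realType} {T : Type} (f : T -> R) : R :=
  sup (range (fun x => `|f x|)).

Definition birk {R : realType} {T : Type} (phi : T -> T) (g : T -> R) (n : nat)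
  : T -> R := fun x => \sum_(k < n) g (iter k phi x).

Definition homeomorphism {T : topologicalType} (f : T -> T) : Prop :=
  continuous f /\ exists g : T -> T, continuous g /\ cancel f g /\ cancel g f.

(* {G_n} (indexed by n : nat; the index 0 is irrelevant) is asymptotically
   additive with approximating sequence {Gk k} *)
Definition asymp_additive {R : realType} {T : topologicalType} (phi : T -> T)
  (G : nat -> T -> R) (Gk : nat -> T -> R) : Prop :=
  (forall n, bounded_borel (G n)) /\ (forall k, continuous (Gk k)) /\
  (fun k => limn_esup (fun n : nat =>
      ((n%:R)^-1 * supnorm (G n \- birk phi (Gk k) n))%:E)) @ \oo --> 0%E.

(* Both involutions only reparametrize the Birkhoff sums: in case (C) theta
   commutes with phi, so S_n (g o theta) = (S_n g) o theta; in case (R) theta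
   conjugates phi to phi^-1, and a Birkhoff sum of phi^-1 along an orbit is the
   Birkhoff sum of phi read backwards from phi^-(n-1), so
   S_n (g o theta) = (S_n g) o theta o phi^(n-1).  Composing with the
   surjection theta_n leaves sup norms unchanged and continuous maps preserve
   Borel functions, hence the defining limit for G o theta is literally the
   one for G. *)
From HB Require Import structures.
From mathcomp Require Import all_boot all_order all_algebra.
From mathcomp Require Import all_classical all_reals all_analysis.
Set Implicit Arguments. Unset Strict Implicit. Unset Printing Implicit Defensive.
Import Order.TTheory GRing.Theory Num.Theory.
Import numFieldNormedType.Exports.
Local Open Scope classical_set_scope.
Local Open Scope ring_scope.

Section Iterates.
Variables (T : Type) (f : T -> T).

Lemma iter_morph (U : Type) (g : U -> U) (h : T -> U) n :
  {morph h : x / f x >-> g x} -> {morph h : x / iter n f x >-> iter n g x}.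
Proof. by move=> hfg x; elim: n => //= n <-; rewrite hfg. Qed.

Lemma iter_can (f' : T -> T) n : cancel f f' -> cancel (iter n f) (iter n f').
Proof. by move=> fK; elim: n => // n IHn x; rewrite [iter n.+1 f x]iterSr /= IHn. Qed.

End Iterates.

Lemma continuous_iter {T : topologicalType} (f : T -> T) n :
  continuous f -> continuous (iter n f).
Proof.
move=> f_cont; elim: n => [|n IHn] /= x; first exact: cvg_id.
exact: continuous_comp (IHn x) (f_cont _).
Qed.

Lemma comp_id_involutive {T : Type} (f : T -> T) : f \o f = id -> involutive f.
Proof. by move=> ffE x; rewrite -[RHS]/(id x) -ffE. Qed.

Lemma involutive_conj {T : Type} (theta f g : T -> T) :
  involutive theta -> f = theta \o g \o theta ->
  {morph theta : x / g x >-> f x}.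
Proof. by move=> thetaK -> x /=; rewrite thetaK. Qed.

Section BirkhoffSums.
Variables (R : realType) (T : Type) (phi : T -> T).

Lemma birk_morph (psi theta : T -> T) (g : T -> R) n :
  {morph theta : x / phi x >-> psi x} ->
  birk phi (g \o theta) n = birk psi g n \o theta.
Proof.
move=> theta_morph; apply: funext => x; apply: eq_bigr => j _ /=.
by rewrite (iter_morph _ theta_morph).
Qed.

Lemma birk_inverse (phiinv : T -> T) (g : T -> R) n :
  cancel phiinv phi -> birk phiinv g n = birk phi g n \o iter n.-1 phiinv.
Proof.
move=> phiinvK; apply: funext => x /=; rewrite /birk (reindex_inj rev_ord_inj).
apply: eq_bigr => j _ /=.
have n_gt0 : (0 < n)%N by apply: leq_ltn_trans (ltn_ord j).
have hj : (j <= n.-1)%N by rewrite -ltnS prednK.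
have -> : (n - j.+1 = n.-1 - j)%N by rewrite -{1}(prednK n_gt0) subSS.
by rewrite -{2}(subnKC hj) iterD iter_can.
Qed.

End BirkhoffSums.

Lemma borel_set_preimage {T U : topologicalType} (h : T -> U) (B : set U) :
  continuous h -> borel_set B -> borel_set (h @^-1` B).
Proof.
move=> h_cont; rewrite /borel_set.
have [S0 SC SU] := smallest_sigma_algebra setT (@open T).
suff : <<s open >> `<=` [set B | <<s open >> (h @^-1` B)] by apply.
apply: smallest_sub.
  split => /=.
  - by rewrite preimage_set0.
  - by move=> A HA; rewrite setTD -preimage_setC -setTD; apply: SC.
  - by move=> A HA; rewrite preimage_bigcup; apply: SU.
by move=> A /= oA; apply: sub_gen_smallest; apply: (proj1 (continuousP h)).
Qed.

Lemma bounded_borel_comp {R : realType} {T U : topologicalType}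
    (f : U -> R) (h : T -> U) :
  continuous h -> bounded_borel f -> bounded_borel (f \o h).
Proof.
move=> h_cont [f_borel [c f_bounded]]; split; last by exists c => x; apply: f_bounded.
by move=> A mA; rewrite comp_preimage; exact: borel_set_preimage h_cont (f_borel _ mA).
Qed.

Lemma supnorm_comp_can {R : realType} {T U : Type} (f : U -> R) (h : T -> U)
    (h' : U -> T) :
  cancel h' h -> supnorm (f \o h) = supnorm f.
Proof.
move=> h'K; rewrite /supnorm; congr sup; apply/seteqP; split => _ [x _ <-].
  by exists (h x).
by exists (h' x) => //=; rewrite h'K.
Qed.

Lemma asymp_additive_comp {R : realType} {T : topologicalType} (phi : T -> T)
    (G Gk Hk : nat -> T -> R) (h h' : nat -> T -> T) :
  (forall n, continuous (h n)) -> (forall n, cancel (h' n) (h n)) ->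
  (forall k, continuous (Hk k)) ->
  (forall k n, birk phi (Hk k) n = birk phi (Gk k) n \o h n) ->
  asymp_additive phi G Gk -> asymp_additive phi (fun n => G n \o h n) Hk.
Proof.
move=> h_cont h'K Hk_cont birkE [G_bb [_ G_lim]]; split; [|split] => //.
  by move=> n; apply: bounded_borel_comp.
rewrite (eq_cvg _ _ (g := fun k => limn_esup (fun n : nat =>
  ((n%:R)^-1 * supnorm (G n \- birk phi (Gk k) n))%:E))) // => k.
congr limn_esup; apply: funext => n.
by rewrite birkE (supnorm_comp_can (G n \- birk phi (Gk k) n) (h'K n)).
Qed.

Theorem lemma3p6 (R : realType) (M : pseudoMetricType R)
  (hM : hausdorff_space M) (cM : compact [set: M])
  (phi : M -> M) (phi_cont : continuous phi)
  (G Gk : nat -> M -> R) :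
  asymp_additive phi G Gk ->
  (* case (C): theta_n = theta *)
  (forall theta : M -> M, homeomorphism theta -> theta \o theta = id ->
     phi = theta \o phi \o theta ->
     asymp_additive phi (fun n => G n \o theta) (fun k => Gk k \o theta)) /\
  (* case (R): phi homeomorphism with inverse phiinv; theta_n = theta o phi^(n-1) *)
  (forall (theta phiinv : M -> M), continuous phiinv ->
     cancel phi phiinv -> cancel phiinv phi ->
     homeomorphism theta -> theta \o theta = id ->
     phiinv = theta \o phi \o theta ->
     asymp_additive phi (fun n => G n \o (theta \o iter n.-1 phi))
                        (fun k => Gk k \o theta)).
Proof.
move=> G_aa; have [_ [Gk_cont _]] := G_aa.
split=> [theta | theta phiinv _ _ phiinvK] [theta_cont _]
    /comp_id_involutive thetaK /(involutive_conj thetaK) theta_morph;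
  have Hk_cont k : continuous (Gk k \o theta)
    by move=> x; apply: continuous_comp; [exact: theta_cont | exact: Gk_cont].
  apply: (asymp_additive_comp (h' := fun _ => theta)) G_aa => // k n.
  exact: birk_morph.
apply: (asymp_additive_comp (h' := fun n => iter n.-1 phiinv \o theta)) G_aa => //.
- by move=> n x; apply: continuous_comp; [exact: continuous_iter | exact: theta_cont].
- by move=> n; apply: can_comp (iter_can _ phiinvK) thetaK.
- move=> k n; rewrite (birk_morph _ _ theta_morph) (birk_inverse _ _ phiinvK).
  by apply: funext => x /=; rewrite (iter_morph _ theta_morph).
Qed.
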